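(* Let $\hat{\mathcal{C}}$, $\tilde{\mathcal{C}}$ and $\mathcal{F}$ be reference frames in $\mathbb{R}^3$, and let $K$ and $C$ be an intrinsic matrix and a corner matrix, with associated unit vectors $a_0,a_1,a_2,a_3\in\mathbb{R}^3$ (defined in the context). Assume ${}^{\mathcal{F}}R_{\hat{\mathcal{C}}}=I$ and ${}^{\hat{\mathcal{C}}}R_{\tilde{\mathcal{C}}}=I$, i.e. all three frames have the same orientation. If $$\big({}^{\mathcal{F}}t_{\tilde{\mathcal{C}}}\big)^T a_i\ \ge\ 0\qquad\text{for all } i\in\{0,1,2,3\},$$ then $\mathcal{V}_{\tilde{\mathcal{C}}}(K,C)\subseteq \mathcal{V}_{\mathcal{F}}(K,C)$.
   Context: A reference frame $\mathcal{G}$ is an origin in $\mathbb{R}^3$ together with an orthonormal basis. For frames $\mathcal{F},\mathcal{G}$, ${}^{\mathcal{F}}R_{\mathcal{G}}$ denotes the rotation matrix whose columns are the basis vectors of $\mathcal{G}$ expressed in $\mathcal{F}$, and ${}^{\mathcal{F}}t_{\mathcal{G}}$ denotes the vector from the origin of $\mathcal{F}$ to the origin of $\mathcal{G}$, expressed in $\mathcal{F}$-coordinates. For a point $y$, ${}^{\mathcal{F}}y$ denotes its coordinates in frame $\mathcal{F}$. Camera model: $K\in\mathbb{R}^{3\times3}$ is an invertible upper triangular intrinsic matrix; a corner matrix is $C=[c_0\ c_1\ c_2\ c_3]\in\mathbb{R}^{2\times 4}$ of four image points. Define $d_i=K^{-1}[c_i^T\ 1]^T$, $l_i=\operatorname{sign}(d_{i,z})\,d_i/\|d_i\|_2$,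 and $a_i=-\frac{l_i\times l_{(i+1)\bmod 4}}{\|l_i\times l_{(i+1)\bmod 4}\|_2}$ for $i=0,1,2,3$. The field of view of a camera at frame $\mathcal{G}$ with parameters $(K,C)$ is $\mathcal{V}_{\mathcal{G}}(K,C)=\{y\in\mathbb{R}^3: ({}^{\mathcal{G}}y)^T a_i\ge 0\ \forall i\in\{0,1,2,3\}\}$. *)

(* Points of R^3 are column vectors 'cV[R]_3 in a fixed
   ambient (world) coordinate system. *)
From mathcomp Require Import all_boot all_order all_algebra.
Set Implicit Arguments. Unset Strict Implicit. Unset Printing Implicit Defensive.
Import Order.TTheory GRing.Theory Num.Theory.
Local Open Scope ring_scope.

Section Defs.
Variable R : rcfType.

(* A reference frame: an origin and a basis, the basis vectors being the
   columns of [fbasis] (in world coordinates). *)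
Record frame := Frame { forigin : 'cV[R]_3 ; fbasis : 'M[R]_3 }.

Definition is_frame (G : frame) : Prop := (fbasis G)^T *m fbasis G = 1%:M.

(* ^F R_G : columns = basis vectors of G expressed in F *)
Definition rel_rot (F G : frame) : 'M[R]_3 := (fbasis F)^T *m fbasis G.
(* ^F t_G : vector from origin of F to origin of G, in F-coordinates *)
Definition rel_trans (F G : frame) : 'cV[R]_3 :=
  (fbasis F)^T *m (forigin G - forigin F).
Definition coords (G : frame) (y : 'cV[R]_3) : 'cV[R]_3 :=
  (fbasis G)^T *m (y - forigin G).

Definition vx (v : 'cV[R]_3) := v ord0 ord0.
Definition vy (v : 'cV[R]_3) := v (inord 1) ord0.
Definition vz (v : 'cV[R]_3) := v (inord 2) ord0.

Definition dot (u v : 'cV[R]_3) : R := \sum_(i < 3) u i ord0 * v i ord0.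
Definition vnorm (v : 'cV[R]_3) : R := Num.sqrt (dot v v).
Definition cross (u v : 'cV[R]_3) : 'cV[R]_3 :=
  \col_(i < 3)
    (if i == 0 :> nat then vy u * vz v - vz u * vy v
     else if i == 1 :> nat then vz u * vx v - vx u * vz v
     else vx u * vy v - vy u * vx v).

Definition upper_triangular (K : 'M[R]_3) : Prop :=
  forall i j : 'I_3, (j < i)%N -> K i j = 0.

Definition dvec (K : 'M[R]_3) (C : 'M[R]_(2, 4)) (i : 'I_4) : 'cV[R]_3 :=
  invmx K *m \col_(j < 3)
    (if j == 0 :> nat then C ord0 i
     else if j == 1 :> nat then C (inord 1) i else 1).
Definition lvec K C i : 'cV[R]_3 :=
  (Num.sg (vz (dvec K C i)) / vnorm (dvec K C i)) *: dvec K C i.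
Definition avec K C i : 'cV[R]_3 :=
  let w := cross (lvec K C i) (lvec K C (ordS i)) in
  (- (vnorm w)^-1) *: w.

(* field of view V_G(K,C), as a predicate on points (world coordinates) *)
Definition in_fov (G : frame) K C (y : 'cV[R]_3) : Prop :=
  forall i : 'I_4, 0 <= dot (coords G y) (avec K C i).

End Defs.

From mathcomp Require Import all_boot all_order all_algebra.
Import Order.TTheory GRing.Theory Num.Theory.
Local Open Scope ring_scope.

(* When two frames have the same orientation, coordinates in them differ only
   by the translation between their origins: ^F y = ^C~ y + ^F t_C~.  Each
   field-of-view constraint is linear in the coordinates, so it holds at ^F y
   as the sum of two nonnegative terms.  Nothing about the a_i is used. *)

Lemma dotDl (R : rcfType) (u v w : 'cV[R]_3) :
  dot (u + v) w = dot u w + dot v w.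
Proof. by rewrite /dot -big_split; apply: eq_bigr => i _; rewrite mxE mulrDl. Qed.

Lemma trmx_mul1_uniq (R : comUnitRingType) n (A B : 'M[R]_n) :
  A^T *m A = 1%:M -> A^T *m B = 1%:M -> B = A.
Proof.
move=> AtA AtB; have AAt : A *m A^T = 1%:M by apply: mulmx1C.
by rewrite -[B]mul1mx -AAt -mulmxA AtB mulmx1.
Qed.

Lemma rel_rot1_basis {R : rcfType} {F G : frame R} :
  is_frame F -> rel_rot F G = 1%:M -> fbasis G = fbasis F.
Proof. exact: trmx_mul1_uniq. Qed.

Lemma coords_same_basis {R : rcfType} {F G : frame R} (y : 'cV[R]_3) :
  fbasis G = fbasis F -> coords F y = coords G y + rel_trans F G.
Proof. by move=> GF; rewrite /coords /rel_trans GF -mulmxDr addrA subrK. Qed.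

Theorem lemma1 (R : rcfType) (Chat Ctil F : frame R) (K : 'M[R]_3)
  (C : 'M[R]_(2, 4)) :
  is_frame Chat -> is_frame Ctil -> is_frame F ->
  upper_triangular K -> K \in unitmx ->
  rel_rot F Chat = 1%:M -> rel_rot Chat Ctil = 1%:M ->
  (forall i : 'I_4, 0 <= dot (rel_trans F Ctil) (avec K C i)) ->
  forall y : 'cV[R]_3, in_fov Ctil K C y -> in_fov F K C y.
Proof.
move=> frame_Chat _ frame_F _ _ rot_F_Chat rot_Chat_Ctil t_ge0 y fov_y i.
have basis_Ctil : fbasis Ctil = fbasis F.
  rewrite (rel_rot1_basis frame_Chat rot_Chat_Ctil).
  exact: rel_rot1_basis frame_F rot_F_Chat.
by rewrite (coords_same_basis y basis_Ctil) dotDl addr_ge0 ?fov_y ?t_ge0.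
Qed.
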